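(* Let $\hat V:[0,T]\times\mathbb{R}^n\times\mathbb{R}^n\to\mathbb{R}$, together with a feedback map $\hat\pi:[0,T]\times\mathbb{R}^n\times\mathbb{R}^n\times U\to U$, be a funnel generator function with respect to the time-varying region $R^s(\cdot)$ and level $\beta$ (as defined in the context). Let $(x_r(\cdot),u_r(\cdot))$ be a reference on $[0,T]$ with $x_r$ differentiable, $\dot x_r(t)=f_r(x_r(t),u_r(t))$ and $(x_r(t),u_r(t))\in R^s(t)$ for all $t\in[0,T]$. Define the feedback law $\pi(t,x)=\hat\pi(t,x,x_r(t),u_r(t))$ and the time-varying set $$\mathcal F(t)=\{x\in\mathbb{R}^n : \hat V(t,x,x_r(t))\le\beta\},\qquad t\in[0,T].$$ Then $\mathcal F$ is a funnel (region of finite-time invariance) for the closed-loop system $\dot x=f(x,\pi(t,x))$ that covers the reference: (i) $x_r(t)\in\mathcal F(t)$ for all $t\in[0,T]$; and (ii) for every $t\in[0,T]$ and every closed-loop solution $x(\cdot)$ defined on $[t,T]$, if $x(t)\in\mathcal F(t)$ then $x(t')\in\mathcal F(t')$ for all $t'\in[t,T]$.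
   Context: The plant is $\dot x=f(x,u)$ with state $x\in\mathbb{R}^n$, input $u\in U\subseteq\mathbb{R}^m$, $f$ polynomial. The reference (planning) model is $\dot x_r=f_r(x_r,u_r)$ with $x_r\in\mathbb{R}^n$ (reference state space equals the plant state space) and $u_r\in U$; write $r=(x_r,u_r)$. $T>0$ is a finite horizon and $R^s:[0,T]\to\mathcal P(\mathbb{R}^n\times U)$ is a given time-varying set of admissible reference state–input pairs. Fix $\beta\in\mathbb{R}$. A funnel generator function w.r.t. $R^s(\cdot)$ is a continuously differentiable function $\hat V:[0,T]\times\mathbb{R}^n\times\mathbb{R}^n\to\mathbb{R}$, radially unbounded in $x$, together with a continuous map $\hat\pi:[0,T]\times\mathbb{R}^n\times\mathbb{R}^n\times U\to U$, such that for all $t\in[0,T]$: (1) for all $x\in\mathbb{R}^n$, $\hat V(t,x,x)<\beta$; (2) for all $(x_r,u_r)\in R^s(t)$ and all $x$ with $\hat V(t,x,x_r)=\beta$, $$\frac{d\hat V}{dt}:=\nabla_x\hat V(t,x,x_r)\cdot f\big(x,\hat\pi(t,x,x_r,u_r)\big)+\nabla_{x_r}\hat V(t,x,x_r)\cdot f_r(x_r,u_r)+\frac{\partial\hat V}{\partial t}(t,x,x_r)<0.$$ A funnel is a map $\mathcal F:[0,T]\to\mathcal P(\mathbb{R}^n)$ such that for every $t\in[0,T]$, $x(t)\in\mathcal F(t)$ implies $x(t')\in\mathcal F(t')$ for all $t'\in[t,T]$ along closed-loop trajectories; it covers $x_r(\cdot)$ if $x_r(t)\in\mathcal F(t)$ for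 all $t$. *)

From Stdlib Require Import Reals Lra.
From Stdlib Require Fin.
Open Scope R_scope.

Definition vec (n : nat) : Type := Fin.t n -> R.

Fixpoint fsum (n : nat) : (Fin.t n -> R) -> R :=
  match n return (Fin.t n -> R) -> R with
  | O => fun _ => 0
  | S k => fun g => g Fin.F1 + fsum k (fun i => g (Fin.FS i))
  end.

Definition vdot {n} (a b : vec n) : R := fsum n (fun i => a i * b i).
Definition vsub {n} (a b : vec n) : vec n := fun i => a i - b i.
Definition vscal {n} (c : R) (a : vec n) : vec n := fun i => c * a i.
Definition vnorm {n} (a : vec n) : R := sqrt (vdot a a).

Definition in_interval (a b t : R) : Prop := a <= t <= b.

Inductive polyfun {n m : nat} : (vec n -> vec m -> R) -> Prop :=
  | pf_const (c : R) : polyfun (fun _ _ => c)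
  | pf_x (i : Fin.t n) : polyfun (fun x _ => x i)
  | pf_u (j : Fin.t m) : polyfun (fun _ u => u j)
  | pf_add p q : polyfun p -> polyfun q -> polyfun (fun x u => p x u + q x u)
  | pf_mul p q : polyfun p -> polyfun q -> polyfun (fun x u => p x u * q x u).

Definition poly_vf {n m} (f : vec n -> vec m -> vec n) : Prop :=
  forall i : Fin.t n, polyfun (fun x u => f x u i).

Definition has_derivs_on {n} (T : R) (V : R -> vec n -> vec n -> R)
  (Vt : R -> vec n -> vec n -> R) (Vx Vxr : R -> vec n -> vec n -> vec n) : Prop :=
  forall t x xr, in_interval 0 T t ->
  forall eps, eps > 0 -> exists delta, delta > 0 /\
  forall s y yr, in_interval 0 T s ->
    Rabs (s - t) + vnorm (vsub y x) + vnorm (vsub yr xr) < delta ->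
    Rabs (V s y yr - V t x xr - Vt t x xr * (s - t)
          - vdot (Vx t x xr) (vsub y x) - vdot (Vxr t x xr) (vsub yr xr))
    <= eps * (Rabs (s - t) + vnorm (vsub y x) + vnorm (vsub yr xr)).

Definition cont_on3 {n k} (T : R) (g : R -> vec n -> vec n -> vec k) : Prop :=
  forall t x xr, in_interval 0 T t ->
  forall eps, eps > 0 -> exists delta, delta > 0 /\
  forall s y yr, in_interval 0 T s ->
    Rabs (s - t) + vnorm (vsub y x) + vnorm (vsub yr xr) < delta ->
    vnorm (vsub (g s y yr) (g t x xr)) < eps.

Definition scalar_as_vec (r : R) : vec 1 := fun _ => r.

Definition C1_on {n} (T : R) (V : R -> vec n -> vec n -> R)
  (Vt : R -> vec n -> vec n -> R) (Vx Vxr : R -> vec n -> vec n -> vec n) : Prop :=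
  has_derivs_on T V Vt Vx Vxr /\
  cont_on3 T (fun t x xr => scalar_as_vec (Vt t x xr)) /\
  cont_on3 T Vx /\ cont_on3 T Vxr.

Definition radially_unbounded {n} (T : R) (V : R -> vec n -> vec n -> R) : Prop :=
  forall t xr, in_interval 0 T t ->
  forall M : R, exists r : R, forall x, vnorm x > r -> V t x xr > M.

Definition cont_pi {n m} (T : R) (U : vec m -> Prop)
  (pih : R -> vec n -> vec n -> vec m -> vec m) : Prop :=
  forall t x xr ur, in_interval 0 T t -> U ur ->
  forall eps, eps > 0 -> exists delta, delta > 0 /\
  forall s y yr vr, in_interval 0 T s -> U vr ->
    Rabs (s - t) + vnorm (vsub y x) + vnorm (vsub yr xr) + vnorm (vsub vr ur) < delta ->
    vnorm (vsub (pih s y yr vr) (pih t x xr ur)) < eps.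

Definition funnel_generator {n m} (T beta : R)
  (f : vec n -> vec m -> vec n) (fr : vec n -> vec m -> vec n)
  (U : vec m -> Prop) (Rs : R -> vec n -> vec m -> Prop)
  (V : R -> vec n -> vec n -> R)
  (Vt : R -> vec n -> vec n -> R) (Vx Vxr : R -> vec n -> vec n -> vec n)
  (pih : R -> vec n -> vec n -> vec m -> vec m) : Prop :=
  C1_on T V Vt Vx Vxr /\
  radially_unbounded T V /\
  (forall t x xr ur, in_interval 0 T t -> U ur -> U (pih t x xr ur)) /\
  cont_pi T U pih /\
  (forall t x, in_interval 0 T t -> V t x x < beta) /\
  (forall t xr ur x, in_interval 0 T t -> Rs t xr ur -> V t x xr = beta ->
     vdot (Vx t x xr) (f x (pih t x xr ur)) + vdot (Vxr t x xr) (fr xr ur)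
     + Vt t x xr < 0).

Definition has_vderiv_on {n} (a b : R) (x x' : R -> vec n) : Prop :=
  forall t, in_interval a b t ->
  forall eps, eps > 0 -> exists delta, delta > 0 /\
  forall s, in_interval a b s -> Rabs (s - t) < delta ->
    vnorm (vsub (vsub (x s) (x t)) (vscal (s - t) (x' t))) <= eps * Rabs (s - t).

(** Along a closed-loop solution [x] the scalar function [s |-> V s (x s) (xr s)] is
    differentiable, with derivative given by the chain rule.  Whenever it touches the
    level [beta] the funnel-generator inequality makes this derivative negative, so the
    function can never cross [beta] upwards: if the level failed at [t1], the supremum
    of the times before [t1] at which it holds would itself satisfy the level (by
    continuity), and from there the function stays below [beta] a little longer,
    contradicting maximality.  The covering property is immediate from
    [V t x x < beta]. *)

From Stdlib Require Import Reals Lra Classical.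
Open Scope R_scope.

Lemma fsum_ext n (g h : Fin.t n -> R) : (forall i, g i = h i) -> fsum n g = fsum n h.
Proof. induction n; simpl; intros E; [reflexivity|]. rewrite E. f_equal. auto. Qed.

Lemma fsum_plus n (g h : Fin.t n -> R) :
  fsum n (fun i => g i + h i) = fsum n g + fsum n h.
Proof. induction n; simpl; [lra|]. rewrite IHn. lra. Qed.

Lemma fsum_minus n (g h : Fin.t n -> R) :
  fsum n (fun i => g i - h i) = fsum n g - fsum n h.
Proof. induction n; simpl; [lra|]. rewrite IHn. lra. Qed.

Lemma fsum_scal n c (g : Fin.t n -> R) : fsum n (fun i => c * g i) = c * fsum n g.
Proof. induction n; simpl; [lra|]. rewrite IHn. lra. Qed.

Lemma fsum_sq_nonneg n (g : Fin.t n -> R) : 0 <= fsum n (fun i => g i * g i).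
Proof. induction n; simpl; [lra|]. specialize (IHn (fun i => g (Fin.FS i))). nra. Qed.

Lemma cauchy_schwarz_cons (x y S P Q : R) :
  0 <= P -> 0 <= Q -> S ^ 2 <= P * Q -> (x * y + S) ^ 2 <= (x * x + P) * (y * y + Q).
Proof.
intros HP HQ HS.
assert (Hcross : 2 * x * y * S <= x * x * Q + y * y * P).
{ destruct (Req_dec P 0) as [P0|P0].
  - subst P. assert (S = 0) by nra. subst S. nra.
  - assert (0 <= (x * S - y * P) ^ 2) by apply pow2_ge_0.
    assert (0 <= x * x * (P * Q - S ^ 2)) by (apply Rmult_le_pos; nra).
    nra. }
nra.
Qed.

Lemma fsum_cauchy_schwarz n (u w : Fin.t n -> R) :
  (fsum n (fun i => u i * w i)) ^ 2
  <= fsum n (fun i => u i * u i) * fsum n (fun i => w i * w i).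
Proof.
induction n; simpl; [lra|].
apply cauchy_schwarz_cons; [apply fsum_sq_nonneg | apply fsum_sq_nonneg | apply IHn].
Qed.

Lemma vdot_nonneg {n} (a : vec n) : 0 <= vdot a a.
Proof. apply fsum_sq_nonneg. Qed.

Lemma vnorm_nonneg {n} (a : vec n) : 0 <= vnorm a.
Proof. apply sqrt_pos. Qed.

Lemma vnorm_sq {n} (a : vec n) : vnorm a * vnorm a = vdot a a.
Proof. apply sqrt_sqrt, vdot_nonneg. Qed.

Lemma vdot_sub_r {n} (u a b : vec n) : vdot u (vsub a b) = vdot u a - vdot u b.
Proof.
unfold vdot, vsub. rewrite <- fsum_minus. apply fsum_ext. intros; ring.
Qed.

Lemma vdot_scal_r {n} (u a : vec n) c : vdot u (vscal c a) = c * vdot u a.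
Proof.
unfold vdot, vscal. rewrite <- fsum_scal. apply fsum_ext. intros; ring.
Qed.

Lemma vdot_cauchy_schwarz {n} (u w : vec n) : Rabs (vdot u w) <= vnorm u * vnorm w.
Proof.
unfold vnorm. rewrite <- sqrt_mult by apply vdot_nonneg.
rewrite <- sqrt_Rsqr_abs. apply sqrt_le_1_alt. unfold Rsqr.
pose proof (fsum_cauchy_schwarz n u w). unfold vdot. simpl in *. lra.
Qed.

Lemma vnorm_scal {n} c (a : vec n) : vnorm (vscal c a) = Rabs c * vnorm a.
Proof.
unfold vnorm.
replace (vdot (vscal c a) (vscal c a)) with (c * c * vdot a a)
  by (unfold vdot, vscal; rewrite <- fsum_scal; apply fsum_ext; intros; ring).
rewrite sqrt_mult by (nra || apply vdot_nonneg).
rewrite <- sqrt_Rsqr_abs. reflexivity.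
Qed.

Lemma vnorm_triang_sub {n} (a c : vec n) : vnorm a <= vnorm (vsub a c) + vnorm c.
Proof.
set (d := vsub a c).
assert (Hexp : vdot a a = vdot d d + 2 * vdot d c + vdot c c).
{ unfold vdot at 2 3 4. rewrite <- (fsum_scal n 2), <- !fsum_plus.
  unfold vdot, d, vsub. apply fsum_ext. intros; ring. }
pose proof (vdot_cauchy_schwarz d c). pose proof (Rle_abs (vdot d c)).
pose proof (vnorm_nonneg d). pose proof (vnorm_nonneg c).
pose proof (vnorm_sq d). pose proof (vnorm_sq c).
unfold vnorm at 1. rewrite Hexp.
rewrite <- (sqrt_Rsqr (vnorm d + vnorm c)) by lra.
apply sqrt_le_1_alt. unfold Rsqr. nra.
Qed.

Lemma vdot_remainder_le {n} (g a v : vec n) h :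
  Rabs (vdot g a - vdot g v * h) <= vnorm g * vnorm (vsub a (vscal h v)).
Proof. rewrite Rmult_comm, <- vdot_scal_r, <- vdot_sub_r. apply vdot_cauchy_schwarz. Qed.

Lemma has_vderiv_on_sub {n} a b c d (x x' : R -> vec n) :
  a <= c -> d <= b -> has_vderiv_on a b x x' -> has_vderiv_on c d x x'.
Proof.
unfold has_vderiv_on, in_interval. intros Hac Hdb Hx t Ht eps Heps.
destruct (Hx t ltac:(lra) eps Heps) as [delta [Hdelta Hd]].
exists delta. split; [exact Hdelta|]. intros s Hs. apply Hd. lra.
Qed.

Lemma has_vderiv_on_lipschitz_at {n} a b (x x' : R -> vec n) s :
  has_vderiv_on a b x x' -> in_interval a b s ->
  exists delta, delta > 0 /\ forall s', in_interval a b s' -> Rabs (s' - s) < delta ->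
    vnorm (vsub (x s') (x s)) <= (1 + vnorm (x' s)) * Rabs (s' - s).
Proof.
intros Hx Hs. destruct (Hx s Hs 1 ltac:(lra)) as [delta [Hdelta Hd]].
exists delta. split; [exact Hdelta|]. intros s' Hs' Hh.
pose proof (Hd s' Hs' Hh).
pose proof (vnorm_triang_sub (vsub (x s') (x s)) (vscal (s' - s) (x' s))).
rewrite vnorm_scal in *. lra.
Qed.

Definition has_rderiv_on (a b : R) (g g' : R -> R) : Prop :=
  forall s, a <= s <= b -> forall eps, eps > 0 -> exists delta, delta > 0 /\
  forall s', a <= s' <= b -> Rabs (s' - s) < delta ->
    Rabs (g s' - g s - g' s * (s' - s)) <= eps * Rabs (s' - s).

Lemma has_rderiv_on_vdot_l {n} a b (g : vec n) (x x' : R -> vec n) :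
  has_vderiv_on a b x x' ->
  has_rderiv_on a b (fun s => vdot g (x s)) (fun s => vdot g (x' s)).
Proof.
intros Hx s Hs eps Heps.
pose proof (vnorm_nonneg g). set (K := vnorm g + 1).
assert (HK : 0 < K) by (unfold K; lra).
destruct (Hx s Hs (eps / K)) as [d [Hd Hxs]]; [apply Rdiv_lt_0_compat; lra|].
exists d. split; [exact Hd|]. intros s' Hs' Hh. specialize (Hxs s' Hs' Hh).
pose proof (Rabs_pos (s' - s)).
rewrite <- vdot_sub_r.
eapply Rle_trans; [apply vdot_remainder_le|].
apply Rle_trans with (vnorm g * (eps / K * Rabs (s' - s))); [apply Rmult_le_compat_l; assumption|].
replace (vnorm g * (eps / K * Rabs (s' - s))) with (vnorm g / K * (eps * Rabs (s' - s)))
  by (field; lra).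
rewrite <- (Rmult_1_l (eps * Rabs (s' - s))) at 2.
apply Rmult_le_compat_r; [nra|].
apply Rmult_le_reg_r with K; [exact HK|].
replace (vnorm g / K * K) with (vnorm g) by (field; lra). unfold K. lra.
Qed.

Lemma has_rderiv_on_comp_curves n T V Vt Vx Vxr a b (x y x' y' : R -> vec n) :
  has_derivs_on T V Vt Vx Vxr -> 0 <= a -> b <= T ->
  has_vderiv_on a b x x' -> has_vderiv_on a b y y' ->
  has_rderiv_on a b (fun s => V s (x s) (y s))
    (fun s => Vt s (x s) (y s) + vdot (Vx s (x s) (y s)) (x' s)
              + vdot (Vxr s (x s) (y s)) (y' s)).
Proof.
intros HV Ha Hb Hx Hy s Hs eps Heps.
assert (Hs0 : in_interval 0 T s) by (unfold in_interval; lra).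
set (gx := Vx s (x s) (y s)). set (gy := Vxr s (x s) (y s)).
pose proof (vnorm_nonneg (x' s)). pose proof (vnorm_nonneg (y' s)).
set (L := 3 + vnorm (x' s) + vnorm (y' s)).
assert (HL : 0 < L) by (unfold L; lra).
destruct (HV s (x s) (y s) Hs0 (eps / (2 * L))) as [dV [HdV HVs]].
{ apply Rdiv_lt_0_compat; lra. }
destruct (has_rderiv_on_vdot_l a b gx x x' Hx s Hs (eps / 4)) as [dx [Hdx Hxs]]; [lra|].
destruct (has_rderiv_on_vdot_l a b gy y y' Hy s Hs (eps / 4)) as [dy [Hdy Hys]]; [lra|].
destruct (has_vderiv_on_lipschitz_at a b x x' s Hx Hs) as [lx [Hlx Hxl]].
destruct (has_vderiv_on_lipschitz_at a b y y' s Hy Hs) as [ly [Hly Hyl]].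
exists (Rmin (Rmin dx dy) (Rmin (Rmin lx ly) (dV / L))). split.
{ repeat apply Rmin_pos; try assumption. apply Rdiv_lt_0_compat; lra. }
intros s' Hs' Hh.
apply Rmin_Rgt_l in Hh as [[Hhx Hhy]%Rmin_Rgt_l [[Hlx' Hly']%Rmin_Rgt_l HhV]%Rmin_Rgt_l].
assert (Hs0' : in_interval 0 T s') by (unfold in_interval in *; lra).
specialize (Hxs s' Hs' Hhx). specialize (Hys s' Hs' Hhy).
specialize (Hxl s' Hs' Hlx'). specialize (Hyl s' Hs' Hly').
rewrite <- vdot_sub_r in Hxs, Hys.
set (h := s' - s) in *.
set (dxs := vsub (x s') (x s)) in *. set (dys := vsub (y s') (y s)) in *.
pose proof (Rabs_pos h).
assert (Hdisp : Rabs h + vnorm dxs + vnorm dys <= L * Rabs h) by (unfold L; lra).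
assert (Hnear : Rabs h + vnorm dxs + vnorm dys < dV).
{ apply Rle_lt_trans with (L * Rabs h); [exact Hdisp|].
  apply Rmult_lt_compat_l with (r := L) in HhV; [|exact HL].
  replace (L * (dV / L)) with dV in HhV by (field; lra). lra. }
assert (HVbound : Rabs (V s' (x s') (y s') - V s (x s) (y s) - Vt s (x s) (y s) * h
                        - vdot gx dxs - vdot gy dys) <= eps / 2 * Rabs h).
{ eapply Rle_trans; [apply (HVs s' (x s') (y s') Hs0' Hnear)|].
  apply Rle_trans with (eps / (2 * L) * (L * Rabs h)).
  - apply Rmult_le_compat_l; [left; apply Rdiv_lt_0_compat; lra|]. fold h dxs dys. exact Hdisp.
  - right. field. lra. }
fold gx gy.
set (G := V s' (x s') (y s') - V s (x s) (y s) - Vt s (x s) (y s) * h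
          - vdot gx dxs - vdot gy dys) in HVbound.
set (Gx := vdot gx dxs - vdot gx (x' s) * h) in Hxs.
set (Gy := vdot gy dys - vdot gy (y' s) * h) in Hys.
replace (V s' (x s') (y s') - V s (x s) (y s)
         - (Vt s (x s) (y s) + vdot gx (x' s) + vdot gy (y' s)) * h)
  with (G + Gx + Gy) by (unfold G, Gx, Gy; ring).
pose proof (Rabs_triang (G + Gx) Gy). pose proof (Rabs_triang G Gx).
lra.
Qed.

Lemma has_rderiv_on_cont a b g g' : has_rderiv_on a b g g' ->
  forall s, a <= s <= b -> forall e, e > 0 -> exists delta, delta > 0 /\
  forall s', a <= s' <= b -> Rabs (s' - s) < delta -> Rabs (g s' - g s) < e.
Proof.
intros Hg s Hs e He. destruct (Hg s Hs 1 ltac:(lra)) as [d1 [Hd1 Hd]].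
set (K := Rabs (g' s) + 1).
assert (HK : 0 < K) by (unfold K; pose proof (Rabs_pos (g' s)); lra).
exists (Rmin d1 (e / K)). split.
{ apply Rmin_pos; [exact Hd1|]. apply Rdiv_lt_0_compat; lra. }
intros s' Hs' Hh. apply Rmin_Rgt_l in Hh as [Hh1 HhK].
specialize (Hd s' Hs' Hh1).
pose proof (Rabs_triang (g s' - g s - g' s * (s' - s)) (g' s * (s' - s))).
replace (g s' - g s - g' s * (s' - s) + g' s * (s' - s)) with (g s' - g s) in * by ring.
rewrite Rabs_mult in *.
assert (K * Rabs (s' - s) < e).
{ apply Rmult_lt_compat_l with (r := K) in HhK; [|exact HK].
  replace (K * (e / K)) with e in HhK by (field; lra). lra. }
unfold K in *. lra.
Qed.

Lemma has_rderiv_on_le_right a b beta g g' s : has_rderiv_on a b g g' ->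
  a <= s <= b -> g s <= beta -> (g s = beta -> g' s < 0) ->
  exists delta, delta > 0 /\
  forall s', a <= s' <= b -> s <= s' < s + delta -> g s' <= beta.
Proof.
intros Hg Hs Hle Hdec. destruct (Rle_lt_or_eq_dec _ _ Hle) as [Hlt|Heq].
- destruct (has_rderiv_on_cont a b g g' Hg s Hs (beta - g s) ltac:(lra)) as [d [Hd Hc]].
  exists d. split; [exact Hd|]. intros s' Hs' Hss'.
  assert (Rabs (s' - s) < d) by (rewrite Rabs_right; lra).
  pose proof (Rle_abs (g s' - g s)). specialize (Hc s' Hs' H). lra.
- specialize (Hdec Heq).
  destruct (Hg s Hs (- g' s / 2) ltac:(lra)) as [d [Hd Hc]].
  exists d. split; [exact Hd|]. intros s' Hs' Hss'.
  assert (Rabs (s' - s) < d) by (rewrite Rabs_right; lra).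
  specialize (Hc s' Hs' H). rewrite (Rabs_right (s' - s)) in Hc by lra.
  pose proof (Rle_abs (g s' - g s - g' s * (s' - s))). nra.
Qed.

Lemma has_rderiv_on_barrier a b beta g g' : a <= b -> has_rderiv_on a b g g' ->
  g a <= beta -> (forall s, a <= s <= b -> g s = beta -> g' s < 0) ->
  forall t, a <= t <= b -> g t <= beta.
Proof.
intros Hab Hg Ha Hdec t1 Ht1.
destruct (Rle_or_lt (g t1) beta) as [|Hviol]; [assumption|exfalso].
set (E := fun s => a <= s <= t1 /\ g s <= beta).
destruct (completeness E) as [ss [Hub Hlub]].
{ exists t1. intros s [Hs _]. lra. }
{ exists a. split; [lra|exact Ha]. }
assert (Hss : a <= ss <= t1).
{ split; [apply Hub; split; [lra|exact Ha]|]. apply Hlub. intros s [Hs _]. lra. }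
assert (Hsup : g ss <= beta).
{ destruct (Rle_or_lt (g ss) beta) as [|Hgt]; [assumption|exfalso].
  destruct (has_rderiv_on_cont a b g g' Hg ss ltac:(lra) (g ss - beta) ltac:(lra))
    as [d [Hd Hc]].
  assert (Happrox : exists e, E e /\ ss - d < e).
  { apply NNPP. intro Hnone. enough (ss <= ss - d) by lra.
    apply Hlub. intros e He. apply Rnot_lt_le. intro Hlt. apply Hnone. now exists e. }
  destruct Happrox as [e [[He Hge] Hde]].
  assert (e <= ss) by (apply Hub; split; assumption).
  assert (Rabs (e - ss) < d) by (rewrite Rabs_left1; lra).
  specialize (Hc e ltac:(lra) H0). rewrite Rabs_minus_sym in Hc.
  pose proof (Rle_abs (g ss - g e)). lra. }
assert (Hbefore : ss < t1) by (destruct (Req_dec ss t1); subst; lra).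
destruct (has_rderiv_on_le_right a b beta g g' ss Hg ltac:(lra) Hsup (Hdec ss ltac:(lra)))
  as [d [Hd Hright]].
set (s' := Rmin (ss + d / 2) t1).
assert (ss < s') by (apply Rmin_glb_lt; lra).
assert (s' <= ss + d / 2) by apply Rmin_l. assert (s' <= t1) by apply Rmin_r.
assert (s' <= ss) by (apply Hub; split; [lra|apply Hright; lra]).
lra.
Qed.

Theorem mainTheorem1 (n m : nat) (T beta : R)
  (f fr : vec n -> vec m -> vec n) (U : vec m -> Prop)
  (Rs : R -> vec n -> vec m -> Prop)
  (V : R -> vec n -> vec n -> R)
  (Vt : R -> vec n -> vec n -> R) (Vx Vxr : R -> vec n -> vec n -> vec n)
  (pih : R -> vec n -> vec n -> vec m -> vec m)
  (xr : R -> vec n) (ur : R -> vec m) :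
  T > 0 ->
  poly_vf f ->
  (forall t x u, Rs t x u -> U u) ->
  funnel_generator T beta f fr U Rs V Vt Vx Vxr pih ->
  has_vderiv_on 0 T xr (fun t => fr (xr t) (ur t)) ->
  (forall t, in_interval 0 T t -> Rs t (xr t) (ur t)) ->
  (forall t, in_interval 0 T t -> V t (xr t) (xr t) <= beta) /\
  (forall t0 (x : R -> vec n), in_interval 0 T t0 ->
     has_vderiv_on t0 T x (fun s => f (x s) (pih s (x s) (xr s) (ur s))) ->
     V t0 (x t0) (xr t0) <= beta ->
     forall t', in_interval t0 T t' -> V t' (x t') (xr t') <= beta).
Proof.
(* Polynomiality of [f], continuity of [pih] and radial unboundedness only matter for
   the existence of closed-loop solutions, which the statement takes as given. *)
intros _ _ _ [[HV _] [_ [_ [_ [Hdiag Hdec]]]]] Hxr HRs.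
split; [intros t Ht; left; exact (Hdiag t (xr t) Ht)|].
intros t0 x Ht0 Hx H0 t' Ht'. unfold in_interval in *.
pose proof (has_rderiv_on_comp_curves n T V Vt Vx Vxr t0 T x xr _ _ HV
  ltac:(lra) ltac:(lra) Hx (has_vderiv_on_sub 0 T t0 T xr _ ltac:(lra) ltac:(lra) Hxr))
  as Hderiv.
apply (has_rderiv_on_barrier t0 T beta _ _ ltac:(lra) Hderiv H0); [|exact Ht'].
intros s Hs Heq.
assert (Hs0 : in_interval 0 T s) by (unfold in_interval; lra).
pose proof (Hdec s (xr s) (ur s) (x s) Hs0 (HRs s Hs0) Heq). lra.
Qed.
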